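(* A finite-dimensional topological manifold, or a finite-dimensional CW complex, has the homotopy fixed point property only if it is a singleton.
   Context: A topological space $X$ has the homotopy fixed point property if for every continuous map $f\colon I\times X\to X$, where $I=[0,1]$, there exists a continuous map $p\colon I\to X$ with $f(t,p(t))=p(t)$ for all $t\in I$. *)

From HB Require Import structures.
From mathcomp Require Import all_boot all_order all_algebra.
From mathcomp Require Import all_classical all_reals all_analysis.
From mathcomp Require Import Rstruct Rstruct_topology.
From Stdlib Require Import Rdefinitions.
Set Implicit Arguments. Unset Strict Implicit. Unset Printing Implicit Defensive.
Import Order.TTheory GRing.Theory Num.Theory.
Local Open Scope classical_set_scope.
Local Open Scope ring_scope.

Definition unit_interval : set R := [set t : R | (0 <= t <= 1)%R].

Definition homotopy_fixed_point_property (X : topologicalType) : Prop :=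
  forall f : R * X -> X,
    {within unit_interval `*` [set: X], continuous f} ->
    exists p : R -> X,
      {within unit_interval, continuous p} /\
      (forall t, unit_interval t -> f (t, p t) = p t).

(* Euclidean space R^n = 'rV[R]_n (product topology) and squared Euclidean norm *)
Definition sqnorm (n : nat) (v : 'rV[R]_n) : R := \sum_(i < n) (v ord0 i) ^+ 2.
Definition closed_disk (n : nat) : set 'rV[R]_n := [set v | sqnorm v <= 1].
Definition open_disk (n : nat) : set 'rV[R]_n := [set v | sqnorm v < 1].
Definition sphere (n : nat) : set 'rV[R]_n := [set v | sqnorm v = 1].
Arguments closed_disk n : clear implicits.
Arguments open_disk n : clear implicits.
Arguments sphere n : clear implicits.

Definition homeomorphic_sets (X Y : topologicalType) (A : set X) (B : set Y)
  : Prop :=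
  exists (f : X -> Y) (g : Y -> X),
    [/\ f @` A `<=` B, g @` B `<=` A,
        (forall x, A x -> g (f x) = x) /\ (forall y, B y -> f (g y) = y),
        ({within A, continuous f}) & ({within B, continuous g})].

Definition topological_manifold (n : nat) (X : topologicalType) : Prop :=
  [/\ hausdorff_space X, @second_countable X &
      forall x : X, exists (U : set X) (V : set 'rV[R]_n),
        [/\ open U, U x, open V & homeomorphic_sets U V]].

Definition finite_dim_manifold (X : topologicalType) : Prop :=
  exists n, topological_manifold n X.

(* CW complex of dimension <= N (Hatcher, Prop. A.2 / Whitehead's definition):
   a Hausdorff space X with cells indexed by a type C, each cell c of dimension
   dim c <= N having a characteristic map Phi c : D^(dim c) -> X such that
   - Phi c is continuous on the closed disk and restricts to a homeomorphism
     of the open disk onto the open cell e c := Phi c (open disk);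
   - the open cells partition X;
   - (closure finiteness) Phi c (boundary sphere) lies in the union of finitely
     many cells of dimension < dim c;
   - (weak topology) A is closed iff A meets each closed cell in a closed set. *)
Definition CW_complex (N : nat) (X : topologicalType) : Prop :=
  hausdorff_space X /\
  exists (C : Type) (dim : C -> nat) (Phi : forall c : C, 'rV[R]_(dim c) -> X),
    let e := fun c => Phi c @` open_disk (dim c) in
    [/\ (forall c, leq (dim c) N),
        (forall c, {within closed_disk (dim c), continuous Phi c}),
        (forall c, exists g : X -> 'rV[R]_(dim c),
           [/\ g @` e c `<=` open_disk (dim c),
               (forall v, open_disk (dim c) v -> g (Phi c v) = v),
               (forall x, e c x -> Phi c (g x) = x) &
               ({within e c, continuous g})]),
        (forall x : X, exists c, e c x /\ forall c', e c' x -> c' = c) /\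
        (forall c, exists F : set C,
           [/\ finite_set F, (forall c', F c' -> leq (dim c').+1 (dim c)) &
               Phi c @` sphere (dim c) `<=` \bigcup_(c' in F) e c']) &
        (forall A : set X, closed A <-> forall c, closed (A `&` closure (e c)))].

Definition finite_dim_CW_complex (X : topologicalType) : Prop :=
  exists N, CW_complex N X.

(** Take the cubic [wiggle], which rises from [wiggle 0 = 0] to [wiggle 1 = 6] but is
    not monotone on [0, 1], and the homotopy [F t y = clamp01 (y + 6 t - wiggle y)] of R.
    A fixed path [q] of [F] satisfies [wiggle (q t) = 6 t], so [q] runs continuously
    from 0 to 1 along a section of [wiggle], which the intermediate value theorem forbids.
    Hence no space X has the homotopy fixed point property as soon as it carries maps
    [r : X -> R] and [s : R -> X] with [r \o s = clamp01]: the homotopy [s \o F \o r] of X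
    would have a fixed path [p], and [r \o p] would be one for [F].
    In a manifold or CW complex of positive dimension such maps come from a Euclidean
    chart (for a CW complex: an open cell of top dimension, which is open): [s] runs along
    a small segment in the chart, and [r] is a tent function of the distance to its start,
    extended by zero outside a compact ball, hence continuous on X.  In dimension zero
    every point is open and closed, and a clopen point of a space with two points also
    rules out the property (map everything to the other side).  Finally the property
    makes X nonempty, so X is a singleton. *)

From mathcomp Require Import all_boot all_order all_algebra.
From mathcomp Require Import all_classical all_reals all_analysis.
From mathcomp Require Import Rstruct Rstruct_topology.
From mathcomp Require Import ring lra.
From Stdlib Require Import Rdefinitions.
Import Order.TTheory GRing.Theory Num.Theory numFieldNormedType.Exports.

Local Open Scope classical_set_scope.
Local Open Scope ring_scope.
(* Stdlib binds its own [R_scope] to [R]; numerals and operators on [R] are meant to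
   be MathComp's. *)
Bind Scope ring_scope with R.

(* Stdlib's [R] and [R^o] carry the same topology, but the arithmetic continuity
   lemmas only unify through [R^o]. *)
Lemma continuousRD (T : topologicalType) (f g : T -> R) :
  continuous f -> continuous g -> continuous (fun x => f x + g x).
Proof. by move=> fc gc x; exact: (@continuousD _ R^o _ f g x (fc x) (gc x)). Qed.

Lemma continuousRB (T : topologicalType) (f g : T -> R) :
  continuous f -> continuous g -> continuous (fun x => f x - g x).
Proof. by move=> fc gc x; exact: (@continuousB _ R^o _ f g x (fc x) (gc x)). Qed.

Lemma continuousRM (T : topologicalType) (f g : T -> R) :
  continuous f -> continuous g -> continuous (fun x => f x * g x).
Proof. by move=> fc gc x; exact: (continuousM (fc x) (gc x)). Qed.

(** * An interval retract rules out the property *)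

Definition clamp01 (z : R) : R := Num.max 0 (Num.min z 1).

Lemma clamp01_id z : 0 <= z <= 1 -> clamp01 z = z.
Proof. by move=> /andP[z0 z1]; rewrite /clamp01 (min_l z1) (max_r z0). Qed.

Lemma clamp01_le0 z : z <= 0 -> clamp01 z = 0.
Proof. by move=> z0; rewrite /clamp01 (min_l (le_trans z0 ler01)) (max_l z0). Qed.

Lemma clamp01_ge1 z : 1 <= z -> clamp01 z = 1.
Proof. by move=> z1; rewrite /clamp01 (min_r z1) (max_r ler01). Qed.

Lemma clamp01_itv z : 0 <= clamp01 z <= 1.
Proof. by rewrite /clamp01 le_max lexx /= ge_max ler01 ge_min lexx orbT. Qed.

Lemma continuous_clamp01 : continuous clamp01.
Proof.
move=> z; apply: (@continuous_max R R (cst 0) (fun z => Num.min z 1) z).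
  exact: cst_continuous.
by apply: (@continuous_min R R id (cst 1) z) => //; exact: cst_continuous.
Qed.

Definition wiggle (y : R) : R := 36 * y ^+ 3 - 45 * y ^+ 2 + 15 * y.

Lemma continuous_wiggle : continuous wiggle.
Proof.
have -> : wiggle = horner (36%:P * 'X^3 - 45%:P * 'X^2 + 15%:P * 'X).
  by apply: funext => y; rewrite /wiggle !hornerE.
exact: (@continuous_horner R).
Qed.

Lemma wiggle_eq0 y : wiggle y = 0 -> y = 0.
Proof.
have pos : 0 < 36 * y ^+ 2 - 45 * y + 15 by have := sqr_ge0 (y - 5/8); nra.
have : wiggle y = y * (36 * y ^+ 2 - 45 * y + 15) by rewrite /wiggle; ring.
by move=> -> /eqP; rewrite mulf_eq0 (gt_eqF pos) orbF => /eqP.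
Qed.

Lemma wiggle_eq6 y : wiggle y = 6 -> y = 1.
Proof.
have pos : 0 < 36 * y ^+ 2 - 9 * y + 6 by have := sqr_ge0 (y - 1/8); nra.
have : wiggle y - 6 = (y - 1) * (36 * y ^+ 2 - 9 * y + 6) by rewrite /wiggle; ring.
move=> E w6; move: E; rewrite w6 subrr => /esym/eqP.
by rewrite mulf_eq0 (gt_eqF pos) orbF subr_eq0 => /eqP.
Qed.

Lemma no_continuous_wiggle_section (q : R -> R) :
  {within `[0, 1], continuous q} ->
  ~ (forall t, 0 <= t <= 1 -> wiggle (q t) = 6 * t).
Proof.
move=> qc wq.
have q0 : q 0 = 0 by apply: wiggle_eq0; rewrite wq ?mulr0 // lexx ler01.
have q1 : q 1 = 1 by apply: wiggle_eq6; rewrite wq ?mulr1 // lexx ler01.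
(* q reaches 1/3 before 1/2, whereas wiggle (1/3) = 4/3 > 3/4 = wiggle (1/2). *)
have [c] : exists2 c, c \in `[0, 1] & q c = 1/2.
  apply: IVT => //; rewrite q0 q1 ge_min le_max.
  by apply/andP; split; apply/orP; [left|right]; lra.
rewrite in_itv /= => c01 qc2.
have c18 : c = 1/8 by have := wq c c01; rewrite qc2 /wiggle; lra.
have [d] : exists2 d, d \in `[0, c] & q d = 1/3.
  apply: IVT; first lra.
    apply: continuous_subspaceW qc => x /=; rewrite !in_itv /= => /andP[x0 xc].
    by rewrite x0 /=; lra.
  by rewrite q0 qc2 ge_min le_max; apply/andP; split; apply/orP; [left|right]; lra.
rewrite in_itv /= => d0c qd.
by have := wq d ltac:(lra); rewrite qd /wiggle; lra.
Qed.

Lemma clamp01_wiggle_fixed t y : 0 <= t <= 1 ->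
  clamp01 (y + 6 * t - wiggle y) = y -> wiggle y = 6 * t.
Proof.
move=> /andP[t0 t1] fixy.
have w0 : wiggle 0 = 0 by rewrite /wiggle; ring.
have w1 : wiggle 1 = 6 by rewrite /wiggle; ring.
have [z0|z0] := leP (y + 6 * t - wiggle y) 0.
  have y0 : y = 0 by rewrite -fixy clamp01_le0.
  by move: z0; rewrite y0 w0; lra.
have [z1|z1] := leP 1 (y + 6 * t - wiggle y).
  have y1 : y = 1 by rewrite -fixy clamp01_ge1.
  by move: z1; rewrite y1 w1; lra.
by move: fixy; rewrite clamp01_id; [lra | rewrite !ltW].
Qed.

Lemma unit_interval_itv : unit_interval = `[0, 1]%classic.
Proof.
apply/seteqP; split => t; rewrite /= in_itv /=.
  by move=> [/RleP t0 /RleP t1]; rewrite t0 t1.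
by move=> /andP[t0 t1]; split; apply/RleP.
Qed.

Lemma interval_retract_not_hfpp (X : topologicalType) (r : X -> R) (s : R -> X) :
  continuous r -> continuous s -> (forall u, r (s u) = clamp01 u) ->
  ~ homotopy_fixed_point_property X.
Proof.
move=> rc sc rs hfpp.
pose g (tx : R * X) := r tx.2 + 6 * tx.1 - wiggle (r tx.2).
have gc : continuous g.
  have rsndc : continuous (r \o snd) := fun tx => continuous_comp cvg_snd (rc _).
  apply: continuousRB; first apply: continuousRD.
  - exact: rsndc.
  - by apply: continuousRM => [?|tx]; [exact: cst_continuous | exact: cvg_fst].
  - move=> tx; apply: (@continuous_comp _ _ _ (r \o snd) wiggle).
      exact: rsndc.
    exact: continuous_wiggle.
have fc : continuous (s \o g) := fun tx => continuous_comp (gc tx) (sc _).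
have [p [pc pfix]] := hfpp _ (continuous_subspaceT fc).
apply: (@no_continuous_wiggle_section (r \o p)).
  by rewrite -unit_interval_itv; apply: within_continuous_comp => // y _; exact: rc.
move=> t t01; apply: clamp01_wiggle_fixed => //.
have ut : unit_interval t by rewrite unit_interval_itv /= in_itv.
by rewrite /= -[in RHS](pfix t ut) rs.
Qed.

Lemma clopen_not_hfpp {X : topologicalType} (A : set X) (a b : X) :
  open A -> closed A -> A a -> ~ A b -> ~ homotopy_fixed_point_property X.
Proof.
move=> oA cA Aa Ab hfpp.
pose f (tx : R * X) := if pselect (A tx.2) then b else a.
have fc : continuous f.
  move=> [t x]; apply: (near_cst_continuous (f (t, x))).
  have [Ax|Ax] := pselect (A x).
    have : nbhs (t, x) (snd @^-1` A) by apply: cvg_snd; exact: open_nbhs_nbhs.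
    by apply: filterS => -[t' x'] /= Ax'; rewrite /f /=; do 2 case: pselect.
  have : nbhs (t, x) (snd @^-1` (~` A)).
    by apply: cvg_snd; apply: open_nbhs_nbhs; split => //; exact: closed_openC.
  by apply: filterS => -[t' x'] /= Ax'; rewrite /f /=; do 2 case: pselect.
have [p [_ pfix]] := hfpp f (continuous_subspaceT fc).
have u0 : unit_interval 0 by rewrite unit_interval_itv /= in_itv /= lexx ler01.
have := pfix 0 u0; rewrite /f /=; case: pselect => [Ap|nAp] /= p0.
  by apply: Ab; rewrite p0.
by apply: nAp; rewrite -p0.
Qed.

(** * Segments in Euclidean charts *)

Definition tent (d : R) : R := Num.min (clamp01 d) (clamp01 (2 - d)).

Lemma tent_id d : 0 <= d <= 1 -> tent d = d.
Proof.
move=> /andP[d0 d1]; rewrite /tent clamp01_id ?d0 // clamp01_ge1; last lra.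
exact: min_l.
Qed.

Lemma tent_ge2 d : 2 <= d -> tent d = 0.
Proof.
move=> d2; rewrite /tent [clamp01 (2 - d)]clamp01_le0; last lra.
by apply: min_r; have /andP[] := clamp01_itv d.
Qed.

Lemma continuous_tent : continuous tent.
Proof.
have c2 : continuous (fun d : R => clamp01 (2 - d)).
  move=> d; apply: (@continuous_comp _ _ _ (fun d : R => 2 - d) clamp01).
    by apply: continuousRB => [?|?]; [exact: cst_continuous | exact: cvg_id].
  exact: continuous_clamp01.
by move=> d; exact: (@continuous_min R R _ _ d (continuous_clamp01 d) (c2 d)).
Qed.

Section SegmentRetraction.
Context {V : normedModType R} (e v0 : V) (h : R).
Hypotheses (e1 : `|e| = 1) (h0 : 0 < h).

Definition segment (u : R) : V := v0 + (clamp01 u * h) *: e.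

Definition segment_retraction (v : V) : R := tent (`|v - v0| / h).

Lemma segment_dist u : `|segment u - v0| = clamp01 u * h.
Proof.
rewrite /segment addrC addKr normrZ e1 mulr1 ger0_norm //.
by have /andP[u0 _] := clamp01_itv u; rewrite mulr_ge0 // ltW.
Qed.

Lemma segment_retractionK u : segment_retraction (segment u) = clamp01 u.
Proof.
by rewrite /segment_retraction segment_dist mulfK ?gt_eqF // tent_id // clamp01_itv.
Qed.

Lemma segment_retraction_far v : 2 * h <= `|v - v0| -> segment_retraction v = 0.
Proof. by move=> far; rewrite /segment_retraction tent_ge2 // ler_pdivlMr. Qed.

Lemma continuous_segment : continuous segment.
Proof.
move=> u; apply: (@continuousD _ V _ (cst v0) (fun u => (clamp01 u * h) *: e)).
  exact: cst_continuous.
apply: cvgZ; last exact: cvg_cst.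
apply: (@continuousRM _ clamp01 (cst h)) => [z|z]; first exact: continuous_clamp01.
exact: cst_continuous.
Qed.

Lemma continuous_segment_retraction : continuous segment_retraction.
Proof.
move=> v; apply: (@continuous_comp _ _ _ (fun v => `|v - v0| / h) tent).
  apply: (@continuousM _ _ (fun v => `|v - v0|) (cst h^-1)); last exact: cst_continuous.
  apply: (@continuous_comp _ _ _ (fun v => v - v0) (fun v : V => `|v|)).
    by apply: continuousB => //; exact: cst_continuous.
  exact: norm_continuous.
exact: continuous_tent.
Qed.

End SegmentRetraction.

Lemma rV_unit_vector {n : nat} : (0 < n)%nat -> exists e : 'rV[R]_n, `|e| = 1.
Proof.
move=> n0; exists (const_mx 1).
have : `|const_mx 1 : 'rV[R]_n| != 0.
  rewrite normr_eq0; apply/eqP => /matrixP/(_ ord0 (Ordinal n0)).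
  by rewrite !mxE => /eqP; rewrite oner_eq0.
by move=> /mx_norm_neq0[[i j] nE]; apply: eq_trans nE _; rewrite mxE normr1.
Qed.

Lemma rV_closed_ball_compact (n : nat) (v0 : 'rV[R]_n) r :
  0 < r -> compact (closed_ball v0 r).
Proof.
move=> r0; apply: bounded_closed_compact; last exact: closed_ball_closed.
exists (`|v0| + r); split; first exact: num_real.
move=> M HM v; rewrite closed_ballE //= => v0v.
apply: ltW; apply: le_lt_trans HM; rewrite -[v](subKr v0) (le_trans (ler_normB _ _)) //.
by rewrite lerD2l.
Qed.

Lemma rV_open_closed_ball {n : nat} {V : set 'rV[R]_n} (v : 'rV[R]_n) :
  open V -> V v -> exists2 del, 0 < del & closed_ball v del `<=` V.
Proof.
move=> oV Vv; have [r rV] : exists r : {posnum R}, closed_ball v r%:num `<=` V.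
  by apply/nbhs_closedballP; exact: (@open_nbhs_nbhs _ v V (conj oV Vv)).
by exists r%:num.
Qed.

Lemma continuous_patch_closed_support (X : topologicalType) (U K : set X) (g : X -> R) :
  open U -> closed K -> K `<=` U -> {within U, continuous g} ->
  (forall x, U x -> ~ K x -> g x = 0) -> continuous (g \_ U).
Proof.
move=> oU cK KU gc g0 x; have [Ux|nUx] := pselect (U x).
  rewrite continuous_open_subspace // in gc.
  have gU : {near x, g =1 g \_ U}.
    by apply: filterS (open_nbhs_nbhs (conj oU Ux)) => y Uy; rewrite patchE mem_set.
  have gUx : (g \_ U) x = g x by rewrite patchE mem_set.
  rewrite /continuous_at gUx.
  exact: cvg_trans (near_eq_cvg gU) (gc x (mem_set Ux)).
apply: (near_cst_continuous (0 : R)).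
have : nbhs x (~` K) by apply: open_nbhs_nbhs; split; [exact: closed_openC | move/KU].
apply: filterS => y nKy; rewrite patchE.
by case: ifPn => [/set_mem Uy|//]; exact: g0.
Qed.

Lemma euclidean_chart_not_hfpp {X : topologicalType} {n : nat} {U : set X}
    {V : set 'rV[R]_n} (v0 : 'rV[R]_n) :
  (0 < n)%nat -> hausdorff_space X -> open U -> homeomorphic_sets U V ->
  open V -> V v0 -> ~ homotopy_fixed_point_property X.
Proof.
move=> n0 hX oU [psi [phi [psiU phiV [phipsi psiphi] psic phic]]] oV Vv0.
have [del del0 ballV] := rV_open_closed_ball v0 oV Vv0.
have [e e1] := rV_unit_vector n0.
have h0 : 0 < del / 2 by rewrite divr_gt0.
pose rho := segment_retraction v0 (del / 2).
pose seg := segment e v0 (del / 2).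
have phiU v : V v -> U (phi v) by move=> Vv; apply: phiV; exists v.
have segB u : ball v0 del (seg u).
  rewrite -ball_normE /= distrC segment_dist //.
  by have /andP[_ u1] := clamp01_itv u; rewrite (le_lt_trans (ler_piMl _ u1)) ?ltW //; lra.
have phi_ball : {in (ball v0 del : set _), continuous phi}.
  rewrite -continuous_open_subspace; last exact: ball_open.
  by apply: continuous_subspaceW phic => v /subset_closed_ball/ballV.
apply: (@interval_retract_not_hfpp X ((rho \o psi) \_ U) (phi \o seg)).
- apply: (@continuous_patch_closed_support _ U (phi @` closed_ball v0 del)) => //.
  + apply: compact_closed hX _; apply: continuous_compact.
      exact: continuous_subspaceW ballV phic.
    exact: rV_closed_ball_compact.
  + by move=> _ [v /ballV Vv <-]; exact: phiU.
  + apply: within_continuous_comp psic => y _.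
    exact: continuous_segment_retraction.
  + move=> x Ux nKx; apply: segment_retraction_far => //.
    rewrite mulrC divfK ?pnatr_eq0 //; rewrite leNgt; apply/negP => psix_near.
    apply: nKx; exists (psi x); last exact: phipsi.
    by apply: subset_closed_ball; rewrite -ball_normE /= distrC.
- move=> u; have := phi_ball _ (mem_set (segB u)).
  exact: continuous_comp (continuous_segment _ _ _ _).
- move=> u; have Vseg : V (seg u) by apply/ballV/subset_closed_ball.
  rewrite patchE mem_set /=; last exact: phiU.
  by rewrite psiphi // /rho /seg segment_retractionK.
Qed.

(** * Disks, spheres and cells *)

Lemma continuous_sqnorm n : continuous (@sqnorm n).
Proof.
apply: (@continuous_big R^o); first exact: add_continuous.
move=> i _; apply: continuousRM => v; exact: coord_continuous.
Qed.

Lemma open_disk_open n : open (open_disk n).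
Proof.
have -> : open_disk n = @sqnorm n @^-1` [set x | x < 1] by [].
by move/continuousP : (@continuous_sqnorm n); apply; exact: open_lt.
Qed.

Lemma closed_disk_closed n : closed (closed_disk n).
Proof.
have -> : closed_disk n = @sqnorm n @^-1` [set x | x <= 1] by [].
by move/continuous_closedP : (@continuous_sqnorm n); apply; exact: closed_le.
Qed.

Lemma sphere_closed n : closed (sphere n).
Proof.
have -> : sphere n = closed_disk n `&` @sqnorm n @^-1` [set x | 1 <= x].
  apply/seteqP; split => v /=; rewrite /closed_disk /=; first by move=> ->; rewrite lexx.
  by move=> [v1 v1']; apply/eqP; rewrite eq_le v1.
apply: closedI; first exact: closed_disk_closed.
by move/continuous_closedP : (@continuous_sqnorm n); apply; exact: closed_ge.
Qed.

Lemma rV_norm_le (n : nat) (v : 'rV[R]_n) c :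
  0 <= c -> (forall i, `|v ord0 i| <= c) -> `|v| <= c.
Proof.
move=> c0 vc; suff : mx_norm v <= c by [].
rewrite mx_normrE; apply: bigmax_le => // -[i j] _.
by rewrite (ord1 i); exact: vc.
Qed.

Lemma closed_disk_compact n : compact (closed_disk n).
Proof.
apply: (@subclosed_compact _ _ (closed_ball (0 : 'rV[R]_n) 1)).
- exact: closed_disk_closed.
- exact: rV_closed_ball_compact.
move=> v v1; rewrite closed_ballE // /closed_ball_ /= sub0r normrN.
apply: rV_norm_le => // i.
have : v ord0 i ^+ 2 <= 1.
  apply: le_trans v1; rewrite /sqnorm (bigD1 i) //= lerDl.
  by apply: sumr_ge0 => j _; exact: sqr_ge0.
rewrite -real_normK ?num_real // => vi1.
by have := normr_ge0 (v ord0 i); nra.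
Qed.

Lemma sphere_sub_closed_disk n : sphere n `<=` closed_disk n.
Proof. by move=> v; rewrite /sphere /closed_disk /= => ->. Qed.

Lemma open_disk_sub_closed_disk n : open_disk n `<=` closed_disk n.
Proof. by move=> v /ltW. Qed.

Lemma sphere_compact n : compact (sphere n).
Proof.
apply: (@subclosed_compact _ _ (closed_disk n)).
- exact: sphere_closed.
- exact: closed_disk_compact.
- exact: sphere_sub_closed_disk.
Qed.

Section TopCell.
Context {X : topologicalType} {C : Type} (dim : C -> nat)
  (Phi : forall c : C, 'rV[R]_(dim c) -> X).
Local Notation cell c := (Phi c @` open_disk (dim c)).
Hypothesis hX : hausdorff_space X.
Hypothesis Phic : forall c, {within closed_disk (dim c), continuous (Phi c)}.
Hypothesis cell_uniq : forall x c1 c2, cell c1 x -> cell c2 x -> c1 = c2.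
Hypothesis boundary_lower : forall c, exists F : set C,
  [/\ finite_set F, (forall c', F c' -> (dim c').+1 <= dim c)%nat &
      Phi c @` sphere (dim c) `<=` \bigcup_(c' in F) cell c'].
Hypothesis weak_topology :
  forall A : set X, closed A <-> forall c, closed (A `&` closure (cell c)).

Lemma closure_cell {c x} :
  closure (cell c) x -> cell c x \/ (Phi c @` sphere (dim c)) x.
Proof.
have cl_disk : closed (Phi c @` closed_disk (dim c)).
  apply: compact_closed hX _; apply: continuous_compact (Phic c) _.
  exact: closed_disk_compact.
move=> clx; have : (Phi c @` closed_disk (dim c)) x.
  rewrite ((closure_id _).1 cl_disk); apply: closureS clx.
  by move=> _ [v /open_disk_sub_closed_disk vD <-]; exists v.
case=> v; rewrite /closed_disk /= le_eqVlt => /orP[/eqP v1|v1] <-.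
  by right; exists v.
by left; exists v.
Qed.

Lemma boundary_not_in_cell {c1 c x} : (dim c1 <= dim c)%nat ->
  (Phi c1 @` sphere (dim c1)) x -> ~ cell c x.
Proof.
move=> c1c bx cx; have [F [_ Fdim Fbd]] := boundary_lower c1.
have [c2 Fc2 c2x] := Fbd x bx.
by move: (leq_trans (Fdim _ Fc2) c1c); rewrite (cell_uniq _ _ _ c2x cx) ltnn.
Qed.

Lemma top_cell_open c : (forall c', (dim c' <= dim c)%nat) -> open (cell c).
Proof.
move=> cmax; rewrite -[cell c]setCK; apply: closed_openC; apply/weak_topology => c'.
have [c'c|c'c] := pselect (c' = c).
  rewrite c'c.
  have -> : ~` cell c `&` closure (cell c) = closure (cell c) `&` Phi c @` sphere (dim c).
    apply/seteqP; split => x /= [x1 x2]; split => //.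
      by case: (closure_cell x2).
    exact: boundary_not_in_cell (leqnn _) x2.
  apply: closedI; first exact: closed_closure.
  apply: compact_closed hX _; apply: continuous_compact; last exact: sphere_compact.
  exact: continuous_subspaceW (@sphere_sub_closed_disk _) (Phic c).
have -> : ~` cell c `&` closure (cell c') = closure (cell c').
  apply/seteqP; split => x /=; first by case.
  move=> clx; split => // cx; case: (closure_cell clx) => [c'x|bx].
    exact: c'c (cell_uniq _ _ _ c'x cx).
  exact: boundary_not_in_cell (cmax c') bx cx.
exact: closed_closure.
Qed.

End TopCell.

Lemma bounded_dim_max {C : Type} {dim : C -> nat} {N : nat} (c0 : C) :
  (forall c, (dim c <= N)%nat) -> exists c, forall c', (dim c' <= dim c)%nat.
Proof.
move=> dimN.
have exP : exists k, `[< exists c, dim c = k >].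
  by exists (dim c0); apply/asboolP; exists c0.
have ubP k : `[< exists c, dim c = k >] -> (k <= N)%nat by move=> /asboolP[c <-].
case: (ex_maxnP exP ubP) => _ /asboolP[c <-] cmax.
by exists c => c'; apply: cmax; apply/asboolP; exists c'.
Qed.

Lemma point_closed (X : topologicalType) (a : X) :
  hausdorff_space X -> closed [set a].
Proof. by move=> hX; apply: accessible_closed_set1; exact: hausdorff_accessible. Qed.

Lemma rV0_eq (k : nat) (v w : 'rV[R]_k) : k = 0%nat -> v = w.
Proof. by move=> k0; subst k; apply/rowP => -[]. Qed.

Lemma manifold_not_hfpp (n : nat) (X : topologicalType) (a b : X) :
  topological_manifold n X -> b <> a -> ~ homotopy_fixed_point_property X.
Proof.
move=> [hX _ /(_ a)[U [V [oU Ua oV hUV]]]] ba.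
case: n => [|n] in V oV hUV *.
  have [psi [phi [_ _ [phipsi _] _ _]]] := hUV.
  have Ua1 : U = [set a].
    apply/seteqP; split => [x Ux|x ->] //=.
    by rewrite -(phipsi x Ux) -(phipsi a Ua); congr phi; exact: rV0_eq.
  by apply: (clopen_not_hfpp [set a] a b) => //; [rewrite -Ua1 | exact: point_closed].
have [psi [_ [psiU _ _ _ _]]] := hUV.
by apply: (euclidean_chart_not_hfpp (psi a) _ hX oU hUV oV) => //; apply: psiU; exists a.
Qed.

Lemma CW_not_hfpp (N : nat) (X : topologicalType) (a b : X) :
  CW_complex N X -> b <> a -> ~ homotopy_fixed_point_property X.
Proof.
move=> [hX [C [dim [Phi [dimN Phic inv [part bd] weak]]]]] ba.
have cell_uniq x c1 c2 : (Phi c1 @` open_disk (dim c1)) x ->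
    (Phi c2 @` open_disk (dim c2)) x -> c1 = c2.
  by move=> x1 x2; have [c [_ u]] := part x; rewrite (u c1 x1) (u c2 x2).
have [ca [ca_a _]] := part a.
have [cm cmax] := bounded_dim_max ca dimN.
have top_open := top_cell_open dim Phi hX Phic cell_uniq bd weak.
have [dcm0|dcm_gt0] := posnP (dim cm).
  have cmax' c : (dim c <= dim ca)%nat by rewrite (leq_trans (cmax c)) // dcm0.
  have dca : dim ca = 0%nat by apply/eqP; rewrite -leqn0 -dcm0 cmax.
  have cell_a : Phi ca @` open_disk (dim ca) = [set a].
    apply/seteqP; split => [y [v _ <-]|y ->] //=.
    by case: ca_a => w _ <-; congr Phi; exact: rV0_eq.
  apply: (clopen_not_hfpp [set a] a b) => //; last exact: point_closed.
  by rewrite -cell_a; exact: top_open.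
have [psi [psiD Phipsi psiPhi psic]] := inv cm.
apply: (euclidean_chart_not_hfpp (V := open_disk (dim cm)) 0 dcm_gt0 hX (top_open _ cmax)).
- exists psi, (Phi cm); split => //.
  exact: continuous_subspaceW (@open_disk_sub_closed_disk _) (Phic cm).
- exact: open_disk_open.
- by rewrite /open_disk /= /sqnorm big1 // => i _; rewrite mxE expr0n.
Qed.

Theorem corollary4p8 (X : topologicalType) :
  (finite_dim_manifold X \/ finite_dim_CW_complex X) ->
  homotopy_fixed_point_property X ->
  exists x : X, forall y : X, y = x.
Proof.
move=> HX hfpp.
have [p _] := hfpp snd (continuous_subspaceT (fun _ => cvg_snd)).
exists (p 0) => b; apply: contrapT => bp.
case: HX => [[n Xn]|[N XN]].
- exact: manifold_not_hfpp Xn bp hfpp.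
- exact: CW_not_hfpp XN bp hfpp.
Qed.
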